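(* Let $\mathbf{D}^*=[\mathbf{d}^*_1,\dots,\mathbf{d}^*_n]\in\mathbb{R}^{d\times n}$ be column-orthogonal and let $\mathbf{x}=\mathbf{D}^*\boldsymbol{\beta}$, where $\boldsymbol{\beta}\in\mathbb{R}^n$ has support $S^*$ with $|S^*|=k$ and non-zero entries satisfying $\gamma\le|\beta_i|\le\Gamma$ for $0<\gamma\le\Gamma$. Let $\rho>0$ with $2\rho<\frac{\gamma}{4\sqrt{k}\Gamma}$. Then for any $\mathbf{D}=[\mathbf{d}_1,\dots,\mathbf{d}_n]\in\mathbb{R}^{d\times n}$ with $\|\mathbf{D}-\mathbf{D}^*\|_{1,2}\le2\rho$, $$S=\arg\max_{T\subseteq[n],|T|\le k}\sum_{i\in T}|\langle\mathbf{d}_i,\mathbf{x}\rangle|=S^*.$$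
   Context: Column-orthogonal means $\mathbf{A}^\top\mathbf{A}=\mathbf{I}$; $\|\mathbf{A}\|_{1,2}$ is the maximum Euclidean norm of the columns of $\mathbf{A}$. *)

From mathcomp Require Import all_boot all_order all_algebra.
Set Implicit Arguments. Unset Strict Implicit. Unset Printing Implicit Defensive.
Import Order.TTheory GRing.Theory Num.Theory.
Local Open Scope ring_scope.

Definition col_norm (R : rcfType) (m n : nat) (A : 'M[R]_(m, n)) (j : 'I_n) : R :=
  Num.sqrt (\sum_(i < m) A i j ^+ 2).

(* ||A||_{1,2} : maximum Euclidean norm of the columns of A (0 if n = 0) *)
Definition norm12 (R : rcfType) (m n : nat) (A : 'M[R]_(m, n)) : R :=
  \big[Num.max/0]_(j < n) col_norm A j.

Definition col_orthogonal (R : rcfType) (m n : nat) (A : 'M[R]_(m, n)) : Prop :=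
  A^T *m A = 1%:M.

Definition supp (R : rcfType) (n : nat) (b : 'cV[R]_n) : {set 'I_n} :=
  [set i | b i 0 != 0].

Definition inner_col (R : rcfType) (m n : nat) (D : 'M[R]_(m, n)) (x : 'cV[R]_m)
    (i : 'I_n) : R :=
  \sum_(r < m) D r i * x r 0.

Definition score (R : rcfType) (m n : nat) (D : 'M[R]_(m, n)) (x : 'cV[R]_m)
    (T : {set 'I_n}) : R :=
  \sum_(i in T) `|inner_col D x i|.

Definition is_argmax (R : rcfType) (m n : nat) (k : nat) (D : 'M[R]_(m, n))
    (x : 'cV[R]_m) (T : {set 'I_n}) : Prop :=
  (#|T| <= k)%N /\
  forall T' : {set 'I_n}, (#|T'| <= k)%N -> score D x T' <= score D x T.

(* Column-orthogonality of [D*] gives [<d*_i, x> = beta_i] and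
   [|x| = |beta| <= sqrt k * Gamma], so by Cauchy-Schwarz every correlation
   [<d_i, x>] lies within [2 rho sqrt k Gamma < gamma / 4] of [beta_i].  Hence
   [|<d_i, x>|] exceeds [gamma / 2] exactly on [S*], and the only set of at most
   [|S*|] indices maximising the sum of these values is [S*] itself. *)

From mathcomp Require Import all_boot all_order all_algebra.
From mathcomp Require Import ring lra.
Set Implicit Arguments.
Unset Strict Implicit.
Unset Printing Implicit Defensive.
Import Order.TTheory GRing.Theory Num.Theory.
Local Open Scope ring_scope.

Section ThresholdSelection.

Variables (R : numDomainType) (I : finType) (a : I -> R) (c : R) (S : {set I}).
Hypotheses (c_ge0 : 0 <= c) (gt_in : forall i, i \in S -> c < a i)
  (le_out : forall i, i \notin S -> a i <= c).

(* Trading the indices of [T :\: S] (each [<= c]) for those of [S :\: T]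
   (each [> c], and at least as many) strictly increases the sum. *)
Lemma sum_lt_threshold_set (T : {set I}) :
  (#|T| <= #|S|)%N -> T != S -> \sum_(i in T) a i < \sum_(i in S) a i.
Proof.
move=> leTS neTS.
rewrite (big_setID S) [X in _ < X](big_setID T) /= setIC ltrD2l.
have card_diff : (#|T :\: S| <= #|S :\: T|)%N.
  by rewrite -(leq_add2l #|T :&: S|) cardsID setIC cardsID.
have [j jST] : exists j, j \in S :\: T.
  apply/set0Pn; apply: contra neTS; rewrite setD_eq0 => leST.
  by rewrite eq_sym eqEcard leST.
apply: (@le_lt_trans _ _ (\sum_(i in T :\: S) c)).
  by apply: ler_sum => i; rewrite inE => /andP[/le_out].
apply: (@le_lt_trans _ _ (\sum_(i in S :\: T) c)).
  by rewrite !sumr_const ler_wpMn2l.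
apply: ltr_sum => [|i]; last by rewrite inE => /andP[_ /gt_in].
by apply/hasP; exists j; rewrite ?mem_index_enum.
Qed.

Lemma threshold_set_argmaxP (T : {set I}) :
  (#|T| <= #|S|)%N /\
    (forall T' : {set I}, (#|T'| <= #|S|)%N ->
       \sum_(i in T') a i <= \sum_(i in T) a i)
  <-> T = S.
Proof.
split=> [[leTS maxT] | ->]; last first.
  split=> // T' leT'S; have [-> // | neT'S] := eqVneq T' S.
  exact/ltW/sum_lt_threshold_set.
apply/eqP; apply: contraT => neTS.
by have := maxT S (leqnn _); rewrite lt_geF // sum_lt_threshold_set.
Qed.

End ThresholdSelection.

Lemma sqr_sum_mul_le (R : realDomainType) (I : finType) (u v : I -> R) :
  (\sum_i u i * v i) ^+ 2 <= (\sum_i u i ^+ 2) * (\sum_i v i ^+ 2).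
Proof.
pose f i j := u i ^+ 2 * v j ^+ 2 - u i * v i * (u j * v j).
have sum_f : \sum_i \sum_j f i j =
    (\sum_i u i ^+ 2) * (\sum_i v i ^+ 2) - (\sum_i u i * v i) ^+ 2.
  by rewrite big_distrlr expr2 big_distrlr -sumrB; apply: eq_bigr => i _;
     rewrite -sumrB.
have lagrange : \sum_i \sum_j (u i * v j - u j * v i) ^+ 2 =
    2 * \sum_i \sum_j f i j.
  rewrite mulr_natl mulr2n [X in _ = _ + X]exchange_big -big_split /=.
  apply: eq_bigr => i _; rewrite -big_split; apply: eq_bigr => j _ /=.
  rewrite /f; ring.
rewrite -subr_ge0 -sum_f -(pmulr_rge0 _ (ltr0n _ 2)) -lagrange.
by apply: sumr_ge0 => i _; apply: sumr_ge0 => j _; apply: sqr_ge0.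
Qed.

Lemma normr_sum_mul_le (R : rcfType) (I : finType) (u v : I -> R) :
  `|\sum_i u i * v i| <=
    Num.sqrt (\sum_i u i ^+ 2) * Num.sqrt (\sum_i v i ^+ 2).
Proof.
rewrite -sqrtrM; last by apply: sumr_ge0 => i _; apply: sqr_ge0.
by rewrite -sqrtr_sqr ler_wsqrtr // sqr_sum_mul_le.
Qed.

Lemma col_norm_cV (R : rcfType) (m : nat) (x : 'cV[R]_m) :
  col_norm x 0 = Num.sqrt ((x^T *m x) 0 0).
Proof. by rewrite mxE; congr Num.sqrt; apply: eq_bigr => r _; rewrite mxE. Qed.

Section ColumnGeometry.

Variables (R : rcfType) (m n : nat).

Lemma inner_colE (D : 'M[R]_(m, n)) (x : 'cV_m) (i : 'I_n) :
  inner_col D x i = (D^T *m x) i 0.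
Proof. by rewrite mxE; apply: eq_bigr => r _; rewrite mxE. Qed.

Lemma inner_colB (D D' : 'M[R]_(m, n)) (x : 'cV_m) (i : 'I_n) :
  inner_col (D - D') x i = inner_col D x i - inner_col D' x i.
Proof. by rewrite !inner_colE linearB mulmxBl !mxE. Qed.

Lemma normr_inner_col_le (D : 'M[R]_(m, n)) (x : 'cV_m) (i : 'I_n) :
  `|inner_col D x i| <= col_norm D i * col_norm x 0.
Proof. exact: normr_sum_mul_le. Qed.

Lemma col_norm_le_norm12 (A : 'M[R]_(m, n)) (j : 'I_n) :
  col_norm A j <= norm12 A.
Proof. exact: le_bigmax. Qed.

Lemma inner_col_orthogonal_mul (A : 'M[R]_(m, n)) (b : 'cV_n) (i : 'I_n) :
  col_orthogonal A -> inner_col A (A *m b) i = b i 0.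
Proof. by move=> orthA; rewrite inner_colE mulmxA orthA mul1mx. Qed.

Lemma col_norm_orthogonal_mul (A : 'M[R]_(m, n)) (b : 'cV_n) :
  col_orthogonal A -> col_norm (A *m b) 0 = col_norm b 0.
Proof.
move=> orthA.
by rewrite !col_norm_cV trmx_mul mulmxA -[_ *m A^T *m A]mulmxA orthA mulmx1.
Qed.

Lemma col_norm_le_sqrt_card_supp (b : 'cV[R]_n) (G : R) : 0 <= G ->
    (forall i, i \in supp b -> `|b i 0| <= G) ->
  col_norm b 0 <= Num.sqrt #|supp b|%:R * G.
Proof.
move=> G_ge0 bG; rewrite /col_norm -(ger0_norm G_ge0) -sqrtr_sqr.
rewrite -sqrtrM ?ler0n // ler_wsqrtr //.
rewrite (bigID (mem (supp b))) /= [X in _ + X]big1 => [|i]; last first.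
  by rewrite inE negbK => /eqP ->; rewrite expr0n.
rewrite addr0 mulr_natl -sumr_const; apply: ler_sum => i /bG biG.
by rewrite -real_normK ?num_real // ler_sqr ?nnegrE.
Qed.

Lemma dist_inner_col_orthogonal_mul (A D : 'M[R]_(m, n))
    (b : 'cV_n) (i : 'I_n) :
  col_orthogonal A ->
  `|inner_col D (A *m b) i - b i 0| <= col_norm (D - A) i * col_norm b 0.
Proof.
move=> orthA; rewrite -(inner_col_orthogonal_mul b i orthA) -inner_colB.
by rewrite -(col_norm_orthogonal_mul b orthA) normr_inner_col_le.
Qed.

End ColumnGeometry.

Theorem lemmaC4 (R : rcfType) (d n k : nat) (Dstar : 'M[R]_(d, n))
  (beta : 'cV[R]_n) (Sstar : {set 'I_n}) (gamma Gamma rho : R) :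
  col_orthogonal Dstar ->
  supp beta = Sstar -> #|Sstar| = k ->
  0 < gamma -> gamma <= Gamma ->
  (forall i : 'I_n, i \in Sstar -> gamma <= `|beta i 0| <= Gamma) ->
  0 < rho ->
  2 * rho < gamma / (4 * Num.sqrt (k%:R) * Gamma) ->
  forall D : 'M[R]_(d, n), norm12 (D - Dstar) <= 2 * rho ->
  forall T : {set 'I_n}, is_argmax k D (Dstar *m beta) T <-> T = Sstar.
Proof.
move=> orthD suppE cardS gamma_gt0 le_gG beta_bnd rho_gt0 rho_small D D_near T.
have beta_norm : col_norm beta 0 <= Num.sqrt k%:R * Gamma.
  rewrite -cardS -suppE; apply: col_norm_le_sqrt_card_supp => [|i]; first lra.
  by rewrite suppE => /beta_bnd /andP[].
have err_small : 2 * rho * (Num.sqrt k%:R * Gamma) < gamma / 2.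
  rewrite -mulrA in rho_small.
  have sG_gt0 : 0 < Num.sqrt k%:R * Gamma.
    (* otherwise [rho_small] reads [2 * rho < gamma / 0 = 0] *)
    rewrite lt0r mulr_ge0 ?sqrtr_ge0 // ?andbT; last lra.
    by apply: contraTneq rho_small => ->; rewrite mulr0 invr0 mulr0; lra.
  by move: rho_small; rewrite ltr_pdivlMr ?(mulr_gt0 _ sG_gt0) //; lra.
have dev i : `|inner_col D (Dstar *m beta) i - beta i 0| < gamma / 2.
  apply: le_lt_trans (dist_inner_col_orthogonal_mul _ _ i orthD) _.
  apply: le_lt_trans err_small.
  apply: ler_pM (sqrtr_ge0 _) (sqrtr_ge0 _) _ beta_norm.
  exact: le_trans (col_norm_le_norm12 _ i) D_near.
rewrite /is_argmax /score -cardS.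
apply: (threshold_set_argmaxP (c := gamma / 2)).
- lra.
- move=> i /beta_bnd /andP[gamma_le _].
  have := lerB_dist (beta i 0) (inner_col D (Dstar *m beta) i).
  by have := dev i; rewrite distrC; lra.
- move=> i; rewrite -suppE inE negbK => /eqP beta_i0.
  by have := dev i; rewrite beta_i0 subr0; lra.
Qed.
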